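(* For every term $s$, every $k\in\mathbb N$ and every heap-machine state $\sigma$, if $\sigma_s\succ^k\sigma$ then $|\sigma|\le(k+1)(3k+4|s|)$.
   Context: Terms (de Bruijn): $s::=n\mid st\mid\lambda s$ with size $|n|=1+n$, $|\lambda s|=1+|s|$, $|st|=1+|s|+|t|$. Programs: lists of commands $\mathsf{ret},\mathsf{var}\,n,\mathsf{lam},\mathsf{app}$, sizes $|\mathsf{var}\,n|=1+n$, $|c|=1$ otherwise, $|P|=1+\sum_{c\in P}|c|$. Compilation: $\gamma n=[\mathsf{var}\,n]$, $\gamma(st)=\gamma s++\gamma t++[\mathsf{app}]$, $\gamma(\lambda s)=\mathsf{lam}::\gamma s++[\mathsf{ret}]$. $\varphi P:=\varphi_{0,[]}P$ with $\varphi_{0,Q}(\mathsf{ret}::P)=(Q,P)$, $\varphi_{k+1,Q}(\mathsf{ret}::P)=\varphi_{k,Q++[\mathsf{ret}]}P$, $\varphi_{k,Q}(\mathsf{lam}::P)=\varphi_{k+1,Q++[\mathsf{lam}]}P$, $\varphi_{k,Q}(c::P)=\varphi_{k,Q++[c]}P$ for $c$ a $\mathsf{var}$ or $\mathsf{app}$, undefined otherwise. Addresses are natural numbers; a closure is a pair $(P,a)$ (program, address); a heap entry is a pair $(g,b)$ (closure, address); a heap $H$ is a list of heap entries; $H[a]$ is the $a$-th entry for $1\le a\le|H|$, undefined otherwise. Lookup: if $H[a]=(g,b)$ then $H[a,0]=g$ and $H[a,n+1]=H[b,n]$; else undefined. Heap machine: states $(T,V,H)$ with $T,V$ lists of closures;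 steps $((\mathsf{var}\,n::P,a)::T,V,H)\succ((P,a)::T,g::V,H)$ if $H[a,n]=g$; $((\mathsf{lam}::P,a)::T,V,H)\succ((P',a)::T,(Q,a)::V,H)$ if $\varphi P=(Q,P')$; $((\mathsf{app}::P,a)::T,g::(Q,b)::V,H)\succ((Q,|H|+1)::(P,a)::T,V,H++[(g,b)])$; $(([],a)::T,V,H)\succ(T,V,H)$. Initial state $\sigma_s:=([(\gamma s,0)],[],[])$. Sizes: $|(P,a)|=|P|+a$ for closures, $|(g,b)|=|g|+b$ for heap entries, and the size of a state $(T,V,H)$ is the sum of the sizes of all closures in $T$ and $V$ and all entries in $H$. *)

From Stdlib Require Import List Arith Lia.
Import ListNotations.

(* de Bruijn terms *)
Inductive term : Type :=
| tvar : nat -> term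
| tapp : term -> term -> term
| tlam : term -> term.

Fixpoint term_size (s : term) : nat :=
  match s with
  | tvar n => 1 + n
  | tapp s t => 1 + term_size s + term_size t
  | tlam s => 1 + term_size s
  end.

Inductive com : Type := retC | varC (n : nat) | lamC | appC.
Definition prog := list com.

Definition com_size (c : com) : nat :=
  match c with varC n => 1 + n | _ => 1 end.

Definition prog_size (P : prog) : nat := 1 + fold_right (fun c acc => com_size c + acc) 0 P.

Fixpoint compile (s : term) : prog :=
  match s with
  | tvar n => [varC n]
  | tapp s t => compile s ++ compile t ++ [appC]
  | tlam s => lamC :: compile s ++ [retC]
  end.

Fixpoint phi_aux (k : nat) (Q : prog) (P : prog) : option (prog * prog) :=
  match P with
  | [] => None
  | retC :: P' => match k with
                  | 0 => Some (Q, P')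
                  | S k' => phi_aux k' (Q ++ [retC]) P'
                  end
  | lamC :: P' => phi_aux (S k) (Q ++ [lamC]) P'
  | c :: P' => phi_aux k (Q ++ [c]) P'
  end.

Definition phi (P : prog) : option (prog * prog) := phi_aux 0 [] P.

Definition closure := (prog * nat)%type.
Definition heapEntry := (closure * nat)%type.
Definition heap := list heapEntry.

(* H[a], defined for 1 <= a <= |H| *)
Definition heap_get (H : heap) (a : nat) : option heapEntry :=
  match a with
  | 0 => None
  | S a' => nth_error H a'
  end.

Fixpoint lookup (H : heap) (a : nat) (n : nat) : option closure :=
  match heap_get H a with
  | None => None
  | Some (g, b) => match n with
                   | 0 => Some g
                   | S n' => lookup H b n'
                   end
  end.

Definition state := (list closure * list closure * heap)%type.

Inductive step : state -> state -> Prop :=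
| step_var : forall n P a T V H g,
    lookup H a n = Some g ->
    step ((varC n :: P, a) :: T, V, H) ((P, a) :: T, g :: V, H)
| step_lam : forall P a T V H Q P',
    phi P = Some (Q, P') ->
    step ((lamC :: P, a) :: T, V, H) ((P', a) :: T, (Q, a) :: V, H)
| step_app : forall P a T g Q b V H,
    step ((appC :: P, a) :: T, g :: (Q, b) :: V, H)
         ((Q, S (length H)) :: (P, a) :: T, V, H ++ [(g, b)])
| step_nil : forall a T V H,
    step (([], a) :: T, V, H) (T, V, H).

Inductive steps : nat -> state -> state -> Prop :=
| steps_refl : forall s, steps 0 s s
| steps_step : forall k s1 s2 s3, step s1 s2 -> steps k s2 s3 -> steps (S k) s1 s3.

Definition init_state (s : term) : state := ([(compile s, 0)], [], []).

Definition closure_size (c : closure) : nat := prog_size (fst c) + snd c.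
Definition entry_size (e : heapEntry) : nat := closure_size (fst e) + snd e.

Definition state_size (st : state) : nat :=
  match st with
  | (T, V, H) =>
      fold_right (fun c acc => closure_size c + acc) 0 T
      + fold_right (fun c acc => closure_size c + acc) 0 V
      + fold_right (fun e acc => entry_size e + acc) 0 H
  end.

(* Every step of the machine adds at most one closure or heap entry, so a state
   reached in k steps holds at most k + 1 of them and its heap has at most k
   entries.  The programs occurring in it are never longer than the compiled
   term, since the only operation producing new programs, the split of phi, does
   not increase size; and every address is at most the heap length.  Hence each
   closure or entry has size at most |gamma s| + 2k <= 3k + 4|s|. *)

From Stdlib Require Import List Arith Lia.
Import ListNotations.

Lemma prog_size_cons (c : com) (P : prog) :
  prog_size (c :: P) = com_size c + prog_size P.
Proof. unfold prog_size; simpl; lia. Qed.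

Lemma prog_size_app (P Q : prog) : prog_size (P ++ Q) + 1 = prog_size P + prog_size Q.
Proof.
  induction P as [|c P IH]; [unfold prog_size; simpl; lia|].
  rewrite <- app_comm_cons, !prog_size_cons; lia.
Qed.

Lemma prog_size_snoc (P : prog) (c : com) : prog_size (P ++ [c]) = prog_size P + com_size c.
Proof.
  pose proof (prog_size_app P [c]).
  assert (prog_size [c] = 1 + com_size c) by (unfold prog_size; simpl; lia).
  lia.
Qed.

Lemma prog_size_compile (s : term) : prog_size (compile s) <= 1 + 2 * term_size s.
Proof.
  induction s as [n|s IHs t IHt|s IHs]; cbn [compile term_size].
  - unfold prog_size; simpl; lia.
  - pose proof (prog_size_app (compile s) (compile t ++ [appC])).
    pose proof (prog_size_snoc (compile t) appC); simpl com_size in *; lia.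
  - rewrite prog_size_cons, prog_size_snoc; simpl com_size; lia.
Qed.

Lemma phi_aux_size (k : nat) (Q P Q' P' : prog) :
  phi_aux k Q P = Some (Q', P') -> prog_size Q' + prog_size P' <= prog_size Q + prog_size P.
Proof.
  revert k Q.
  induction P as [|c P IH]; intros k Q Hphi; [discriminate|].
  rewrite prog_size_cons.
  assert (Hshift : forall k', phi_aux k' (Q ++ [c]) P = Some (Q', P') ->
                   prog_size Q' + prog_size P' <= prog_size Q + (com_size c + prog_size P)).
  { intros k' Hk'; apply IH in Hk'; rewrite prog_size_snoc in Hk'; lia. }
  destruct c; simpl in Hphi; eauto.
  destruct k; eauto.
  injection Hphi as <- <-; simpl; lia.
Qed.

Lemma phi_size (P Q P' : prog) :
  phi P = Some (Q, P') -> prog_size Q <= prog_size P /\ prog_size P' <= prog_size P.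
Proof.
  intros Hphi; apply phi_aux_size in Hphi.
  assert (prog_size [] = 1) by reflexivity.
  assert (1 <= prog_size Q /\ 1 <= prog_size P') by (unfold prog_size; lia).
  lia.
Qed.

Lemma lookup_In (H : heap) (a n : nat) (g : closure) :
  lookup H a n = Some g -> exists b, In (g, b) H.
Proof.
  revert a; induction n as [|n IH]; intros a Hl; simpl in Hl;
    destruct (heap_get H a) as [[g' b]|] eqn:Hget; try discriminate; eauto.
  injection Hl as <-. exists b.
  destruct a; [discriminate|]. eapply nth_error_In; exact Hget.
Qed.

Lemma sum_le_length_mul {A : Type} (f : A -> nat) (B : nat) (l : list A) :
  Forall (fun x => f x <= B) l -> fold_right (fun x acc => f x + acc) 0 l <= length l * B.
Proof. induction 1; simpl; lia. Qed.

Section Invariant.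

Variable M : nat.

Definition closure_bounded (h : nat) (c : closure) : Prop :=
  prog_size (fst c) <= M /\ snd c <= h.

Definition entry_bounded (h : nat) (e : heapEntry) : Prop :=
  closure_bounded h (fst e) /\ snd e <= h.

Definition state_bounded (k : nat) (st : state) : Prop :=
  let '(T, V, H) := st in
  length T + length V + length H <= k + 1 /\ length H <= k /\
  Forall (closure_bounded (length H)) T /\ Forall (closure_bounded (length H)) V /\
  Forall (entry_bounded (length H)) H.

Lemma closure_bounded_mono (h h' : nat) (l : list closure) :
  h <= h' -> Forall (closure_bounded h) l -> Forall (closure_bounded h') l.
Proof. intros Hh; apply Forall_impl; unfold closure_bounded; lia. Qed.

Lemma entry_bounded_mono (h h' : nat) (l : heap) :
  h <= h' -> Forall (entry_bounded h) l -> Forall (entry_bounded h') l.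
Proof. intros Hh; apply Forall_impl; unfold entry_bounded, closure_bounded; lia. Qed.

Lemma step_state_bounded (k : nat) (st st' : state) :
  state_bounded k st -> step st st' -> state_bounded (S k) st'.
Proof.
  intros Hst Hs; destruct Hs as [n P a T V H g Hl|P a T V H Q P' Hphi|P a T g Q b V H|a T V H];
    simpl in Hst |- *; destruct Hst as (Hlen & HH & HT & HV & HE);
    inversion HT as [|c T' [Hc Ha] HT']; subst; unfold closure_bounded in *; simpl in *.
  - destruct (lookup_In _ _ _ _ Hl) as [b Hin].
    destruct (proj1 (Forall_forall _ _) HE _ Hin) as [Hg _].
    rewrite prog_size_cons in Hc.
    repeat split; try lia; auto.
    constructor; [simpl; lia | exact HT'].
  - apply phi_size in Hphi. rewrite prog_size_cons in Hc.
    repeat split; try lia; auto.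
    + constructor; [simpl; lia | exact HT'].
    + constructor; [simpl; lia | exact HV].
  - inversion HV as [|? V1 [Hg Hga] HV1]; subst.
    inversion HV1 as [|? V2 [HQ Hb] HV2]; subst; simpl in *.
    rewrite length_app; simpl.
    rewrite prog_size_cons in Hc.
    repeat split; try lia.
    + constructor; [simpl; lia|].
      constructor; [simpl; lia|].
      eapply closure_bounded_mono; [|eassumption]; lia.
    + eapply closure_bounded_mono; [|eassumption]; lia.
    + apply Forall_app; split.
      * eapply entry_bounded_mono; [|eassumption]; lia.
      * repeat constructor; simpl; lia.
  - repeat split; auto; lia.
Qed.

Lemma steps_state_bounded (j : nat) (st st' : state) :
  steps j st st' -> forall i, state_bounded i st -> state_bounded (i + j) st'.
Proof.
  induction 1 as [|j st1 st2 st3 Hs _ IH]; intros i Hi.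
  - rewrite Nat.add_0_r; exact Hi.
  - rewrite <- Nat.add_succ_comm. apply IH. eapply step_state_bounded; eauto.
Qed.

Lemma state_size_bounded (k : nat) (st : state) :
  state_bounded k st -> state_size st <= (k + 1) * (M + 2 * k).
Proof.
  destruct st as [[T V] H]; intros (Hlen & HH & HT & HV & HE); unfold state_size.
  assert (Hcl : forall c, closure_bounded (length H) c -> closure_size c <= M + 2 * k)
    by (unfold closure_bounded, closure_size; lia).
  assert (Hen : forall e, entry_bounded (length H) e -> entry_size e <= M + 2 * k)
    by (unfold entry_bounded, closure_bounded, entry_size, closure_size; lia).
  pose proof (sum_le_length_mul _ _ T (Forall_impl _ Hcl HT)).
  pose proof (sum_le_length_mul _ _ V (Forall_impl _ Hcl HV)).
  pose proof (sum_le_length_mul _ _ H (Forall_impl _ Hen HE)).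
  pose proof (Nat.mul_le_mono_r _ _ (M + 2 * k) Hlen).
  lia.
Qed.

End Invariant.

Theorem theorem17 (s : term) (k : nat) (sigma : state) :
  steps k (init_state s) sigma ->
  state_size sigma <= (k + 1) * (3 * k + 4 * term_size s).
Proof.
  intros Hs.
  set (M := prog_size (compile s)).
  assert (Hinit : state_bounded M 0 (init_state s)).
  { simpl; repeat split; auto. repeat constructor; unfold closure_bounded; simpl; lia. }
  pose proof (state_size_bounded M k sigma (steps_state_bounded M _ _ _ Hs 0 Hinit)) as Hsize.
  assert (HM : M <= 1 + 2 * term_size s) by apply prog_size_compile.
  assert (Hs_pos : 1 <= term_size s) by (destruct s; simpl; lia).
  assert (Hfactor : M + 2 * k <= 3 * k + 4 * term_size s) by lia.
  pose proof (Nat.mul_le_mono_l _ _ (k + 1) Hfactor).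
  lia.
Qed.
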